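(* For every annotated type $\theta$ and every ascending chain $u:\mathbb{N}\to[\![\theta^*]\!]_{\bot\star}$, if $\mathsf{safe}\,\theta\,(u_i)$ holds for all $i$, then $\mathsf{safe}\,\theta\,(\bigsqcup_i u_i)$ holds.
   Context: Fix sets $\mathsf{Principals}$, $\mathsf{Privileges}$. Types $t::=\mathtt{bool}\mid t_1\to t_2$. $\bot,\star$ are two distinct values that are neither booleans nor functions. For a cpo $C$ (poset with lubs of ascending chains), $C_{\bot\star}=C\cup\{\bot,\star\}$ with $u\le v$ iff $u=\bot$, or $u=v$, or $u,v\in C$ and $u\le v$ in $C$. $[\![\mathtt{bool}]\!]=\{\mathsf{true},\mathsf{false}\}$ ordered by equality; $\mathcal{P}(\mathsf{Privileges})$ ordered by equality; $[\![t_1\to t_2]\!]=\mathcal{P}(\mathsf{Privileges})\to[\![t_1]\!]\to[\![t_2]\!]_{\bot\star}$, continuous functions ordered pointwise (lubs pointwise). Annotated types: $\theta::=\mathtt{bool}\mid\theta_1\xrightarrow{\Pi}\theta_2$ with $\Pi\subseteq\mathsf{Privileges}$; erasure $\mathtt{bool}^*=\mathtt{bool}$, $(\theta_1\xrightarrow{\Pi}\theta_2)^*=\theta_1^*\to\theta_2^*$. The predicate $\mathsf{safe}\,\theta$ on $[\![\theta^*]\!]_{\bot\star}$: $\mathsf{safe}\,\theta(\bot)$ is true and $\mathsf{safe}\,\theta(\star)$ is false for all $\theta$; otherwise $\mathsf{safe}\,\mathtt{bool}(b)$ is true, and $\mathsf{safe}(\theta_1\xrightarrow{\Pi}\theta_2)(f)$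 iff for all $P\subseteq\mathsf{Privileges}$ and all $d\in[\![\theta_1^*]\!]$, $\Pi\subseteq P$ and $\mathsf{safe}\,\theta_1(d)$ imply $\mathsf{safe}\,\theta_2(fPd)$. *)

Set Implicit Arguments.

(* Subsets of Privileges, i.e. P(Privileges); ordered by equality (discrete). *)
Definition Pset (Priv : Type) := Priv -> Prop.
Definition psubset {Priv : Type} (A B : Pset Priv) : Prop := forall x, A x -> B x.

Definition ascending {A : Type} (le : A -> A -> Prop) (u : nat -> A) : Prop :=
  forall i, le (u i) (u (S i)).
Definition is_lub {A : Type} (le : A -> A -> Prop) (u : nat -> A) (l : A) : Prop :=
  (forall i, le (u i) l) /\ (forall m, (forall i, le (u i) m) -> le l m).
Definition monotone {A B : Type} (leA : A -> A -> Prop) (leB : B -> B -> Prop)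
  (f : A -> B) : Prop := forall x y, leA x y -> leB (f x) (f y).
Definition continuous {A B : Type} (leA : A -> A -> Prop) (leB : B -> B -> Prop)
  (f : A -> B) : Prop :=
  monotone leA leB f /\
  (forall u l, ascending leA u -> is_lub leA u l -> is_lub leB (fun i => f (u i)) (f l)).

Inductive lift (A : Type) : Type :=
| Bot : lift A
| Star : lift A
| Val : A -> lift A.
Arguments Bot {A}. Arguments Star {A}. Arguments Val {A} _.

(* u <= v iff u = ⊥, or u = v, or u,v ∈ C with u <= v in C
   (the case u = v ∈ C is subsumed by reflexivity of the order on C). *)
Definition le_lift {A : Type} (le : A -> A -> Prop) (u v : lift A) : Prop :=
  match u, v with
  | Bot, _ => True
  | Star, Star => True
  | Val a, Val b => le a b
  | _, _ => False
  end.

Inductive ty : Type := TBool | TArr (t1 t2 : ty).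

(* Since P(Privileges) is discretely ordered,
   continuity in the first argument is automatic, so only continuity of
   each f P : [[t1]] -> [[t2]]_{bot,star} is required. *)
Fixpoint dom (Priv : Type) (t : ty) : {A : Type & A -> A -> Prop} :=
  match t with
  | TBool => existT (fun A : Type => A -> A -> Prop) (bool : Type) (@eq bool)
  | TArr t1 t2 =>
      existT (fun A : Type => A -> A -> Prop)
        {f : Pset Priv -> projT1 (dom Priv t1) -> lift (projT1 (dom Priv t2))
           | forall P, continuous (projT2 (dom Priv t1))
                                  (le_lift (projT2 (dom Priv t2))) (f P)}
        (fun f g => forall P d,
            le_lift (projT2 (dom Priv t2)) (proj1_sig f P d) (proj1_sig g P d))
  end.

Definition carrier (Priv : Type) (t : ty) : Type := projT1 (dom Priv t).
Definition le_dom (Priv : Type) (t : ty) : carrier Priv t -> carrier Priv t -> Prop :=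
  projT2 (dom Priv t).

Inductive aty (Priv : Type) : Type :=
| ABool : aty Priv
| AArr : aty Priv -> Pset Priv -> aty Priv -> aty Priv.
Arguments ABool {Priv}.

Fixpoint erase {Priv : Type} (th : aty Priv) : ty :=
  match th with
  | ABool => TBool
  | AArr th1 _ th2 => TArr (erase th1) (erase th2)
  end.

Fixpoint safe {Priv : Type} (th : aty Priv) : lift (carrier Priv (erase th)) -> Prop :=
  match th return lift (carrier Priv (erase th)) -> Prop with
  | ABool => fun v => match v with Bot => True | Star => False | Val _ => True end
  | AArr th1 Pi th2 => fun v =>
      match v with
      | Bot => True
      | Star => False
      | Val f => forall (P : Pset Priv) (d : carrier Priv (erase th1)),
          psubset Pi P -> safe th1 (Val d) -> safe th2 (proj1_sig f P d)
      end
  end.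

(* Safety is downward closed, so it suffices to bound the lub of a chain of
   safe functions pointwise by the lub of the chain of their applications,
   which is safe by induction on the result type.  The bound comes from the
   fact that every [[t]] is chain complete, with lubs of functions computed
   pointwise. *)

From Stdlib Require Import Lia Classical ClassicalEpsilon.

Section Preorder.

Variables (A : Type) (le : A -> A -> Prop).
Hypothesis le_refl : forall x, le x x.
Hypothesis le_trans : forall x y z, le x y -> le y z -> le x z.

Lemma ascending_le (u : nat -> A) :
  ascending le u -> forall i j, i <= j -> le (u i) (u j).
Proof.
  intros Hu i j Hij. induction Hij as [|j _ IH]; [apply le_refl|].
  exact (le_trans _ _ _ IH (Hu j)).
Qed.

Lemma is_lub_shift (u : nat -> A) (v : nat -> A) (i : nat) (l : A) :
  ascending le u -> (forall k, v k = u (i + k)) -> is_lub le v l -> is_lub le u l.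
Proof.
  intros Hu Hv [Hub Hleast]. split.
  - intros j. apply le_trans with (u (i + j)).
    + apply ascending_le; [exact Hu | lia].
    + rewrite <- Hv. apply Hub.
  - intros m Hm. apply Hleast. intros k. rewrite Hv. apply Hm.
Qed.

End Preorder.

Definition chain_complete {A : Type} (le : A -> A -> Prop) : Prop :=
  forall u, ascending le u -> exists l, is_lub le u l.

Section Lift.

Variables (A : Type) (le : A -> A -> Prop).
Hypothesis le_refl : forall x, le x x.
Hypothesis le_trans : forall x y z, le x y -> le y z -> le x z.

Lemma le_lift_refl (v : lift A) : le_lift le v v.
Proof. destruct v; simpl; auto. Qed.

Lemma le_lift_trans (u v w : lift A) :
  le_lift le u v -> le_lift le v w -> le_lift le u w.
Proof. destruct u, v, w; simpl; try tauto; eauto. Qed.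

Lemma is_lub_Val (v : nat -> lift A) (a : nat -> A) (l : A) :
  (forall k, v k = Val (a k)) -> is_lub le a l -> is_lub (le_lift le) v (Val l).
Proof.
  intros Hv [Hub Hleast]. split.
  - intros k. rewrite Hv. apply Hub.
  - intros [| |m] Hm; try (specialize (Hm 0); rewrite Hv in Hm; contradiction).
    apply Hleast. intros k. specialize (Hm k). rewrite Hv in Hm. exact Hm.
Qed.

Lemma lub_not_Star (u : nat -> lift A) (l : lift A) :
  (forall i, u i <> Star) -> is_lub (le_lift le) u l -> l <> Star.
Proof.
  intros Hu [Hub Hleast] ->. apply (Hleast Bot). intros i.
  specialize (Hu i). specialize (Hub i). destruct (u i); simpl in *; tauto.
Qed.

(* A chain in the lifted order is eventually constant [Bot], or eventually
   [Star], or eventually a chain of values. *)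
Lemma lift_chain_complete :
  chain_complete le -> chain_complete (le_lift le).
Proof.
  intros HA u Hu.
  assert (Hu_le := ascending_le _ _ le_lift_refl le_lift_trans u Hu).
  destruct (classic (exists i, u i <> Bot)) as [[i Hi] | Hall].
  - destruct (u i) as [| |a] eqn:Ei; [congruence| |].
    + exists Star.
      apply (is_lub_shift _ _ le_lift_refl le_lift_trans u (fun _ => Star) i); auto.
      * intros k. pose proof (Hu_le i (i + k) ltac:(lia)) as H.
        rewrite Ei in H. destruct (u (i + k)); simpl in H; tauto.
      * split; [intros; exact I|]. intros m Hm. exact (Hm 0).
    + set (a_ k := match u (i + k) with Val b => b | _ => a end).
      assert (Ha : forall k, u (i + k) = Val (a_ k)).
      { intros k. pose proof (Hu_le i (i + k) ltac:(lia)) as H.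
        rewrite Ei in H. unfold a_. destruct (u (i + k)); simpl in H; tauto. }
      destruct (HA a_) as [l Hl].
      { intros k. pose proof (Hu (i + k)) as H.
        rewrite Ha, plus_n_Sm, Ha in H. exact H. }
      exists (Val l).
      apply (is_lub_shift _ _ le_lift_refl le_lift_trans u (fun k => u (i + k)) i); auto.
      exact (is_lub_Val _ _ _ Ha Hl).
  - exists Bot. split; [|intros; exact I].
    intros j. destruct (u j) eqn:Ej; simpl; auto;
      exfalso; apply Hall; exists j; congruence.
Qed.

End Lift.

Section PointwiseLub.

Variables (A B : Type) (leA : A -> A -> Prop) (leB : B -> B -> Prop).
Hypothesis leB_trans : forall x y z, leB x y -> leB y z -> leB x z.

Lemma continuous_pointwise_lub (F : nat -> A -> B) (H : A -> B) :
  (forall i, continuous leA leB (F i)) ->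
  (forall x, is_lub leB (fun i => F i x) (H x)) ->
  continuous leA leB H.
Proof.
  intros HF HH.
  assert (Hmono : monotone leA leB H).
  { intros x y Hxy. apply (proj2 (HH x)). intros i.
    apply leB_trans with (F i y).
    - exact (proj1 (HF i) x y Hxy).
    - exact (proj1 (HH y) i). }
  split; [exact Hmono|].
  intros w l Hw Hl. split.
  - intros j. apply Hmono, (proj1 Hl).
  - intros m Hm. apply (proj2 (HH l)). intros i.
    apply (proj2 (proj2 (HF i) w l Hw Hl)). intros j.
    apply leB_trans with (H (w j)); [exact (proj1 (HH (w j)) i) | apply Hm].
Qed.

End PointwiseLub.

Lemma le_dom_refl {Priv t} (x : carrier Priv t) : le_dom Priv t x x.
Proof.
  revert x. induction t as [|t1 _ t2 IH2]; unfold le_dom, carrier in *; simpl.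
  - reflexivity.
  - intros f P d. apply le_lift_refl, IH2.
Qed.

Lemma le_dom_trans {Priv t} (x y z : carrier Priv t) :
  le_dom Priv t x y -> le_dom Priv t y z -> le_dom Priv t x z.
Proof.
  revert x y z. induction t as [|t1 _ t2 IH2]; unfold le_dom, carrier in *; simpl.
  - intros; congruence.
  - intros f g h Hfg Hgh P d. eapply le_lift_trans; eauto.
Qed.

(* Sending [Star] to [Bot] is a junk value; every use excludes [Star]. *)
Definition app {Priv t1 t2} (v : lift (carrier Priv (TArr t1 t2))) (P : Pset Priv)
  (d : carrier Priv t1) : lift (carrier Priv t2) :=
  match v with Val g => proj1_sig g P d | _ => Bot end.

Lemma app_continuous {Priv t1 t2} {v : lift (carrier Priv (TArr t1 t2))} P :
  v <> Star -> continuous (le_dom Priv t1) (le_lift (le_dom Priv t2)) (app v P).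
Proof.
  intros Hv. destruct v as [| |g]; [|congruence|exact (proj2_sig g P)].
  split; [intros x y _; exact I|]. intros w l _ _. split; intros; exact I.
Qed.

Lemma app_ascending {Priv t1 t2} {u : nat -> lift (carrier Priv (TArr t1 t2))} :
  ascending (le_lift (le_dom Priv (TArr t1 t2))) u -> (forall i, u i <> Star) ->
  forall P d, ascending (le_lift (le_dom Priv t2)) (fun i => app (u i) P d).
Proof.
  intros Hu Hns P d i. specialize (Hu i). specialize (Hns i).
  destruct (u i) as [| |g]; [exact I|congruence|].
  destruct (u (S i)) as [| |g']; simpl in Hu; [contradiction..|apply Hu].
Qed.

Lemma fun_chain_lub {Priv t1 t2} (u : nat -> lift (carrier Priv (TArr t1 t2))) :
  chain_complete (le_lift (le_dom Priv t2)) ->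
  ascending (le_lift (le_dom Priv (TArr t1 t2))) u -> (forall i, u i <> Star) ->
  exists h : carrier Priv (TArr t1 t2),
    (forall i, le_lift (le_dom Priv (TArr t1 t2)) (u i) (Val h)) /\
    (forall P d, is_lub (le_lift (le_dom Priv t2)) (fun i => app (u i) P d)
                        (proj1_sig h P d)).
Proof.
  intros Hcompl Hu Hns.
  assert (Hlub : forall P d, exists l,
             is_lub (le_lift (le_dom Priv t2)) (fun i => app (u i) P d) l).
  { intros P d. exact (Hcompl _ (app_ascending Hu Hns P d)). }
  destruct (choice _ (fun P => choice _ (Hlub P))) as [H HH].
  assert (Hcont : forall P, continuous (le_dom Priv t1) (le_lift (le_dom Priv t2)) (H P)).
  { intros P.
    apply (continuous_pointwise_lub _ _ _ _ (le_lift_trans _ _ le_dom_trans)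
             (fun i => app (u i) P)).
    - intros i. exact (app_continuous P (Hns i)).
    - exact (HH P). }
  exists (exist _ H Hcont). split; [|exact HH].
  intros i. specialize (Hns i).
  destruct (u i) as [| |g] eqn:Ei; [exact I|congruence|].
  intros P d. pose proof (proj1 (HH P d) i) as K. simpl in K. rewrite Ei in K. exact K.
Qed.

Lemma dom_chain_complete Priv t : chain_complete (le_dom Priv t).
Proof.
  induction t as [|t1 _ t2 IH2]; intros u Hu.
  - exists (u 0).
    assert (Hconst : forall i, u i = u 0).
    { induction i as [|i IH]; [reflexivity|]. rewrite <- IH. symmetry. apply Hu. }
    split; [exact Hconst|]. intros m Hm. rewrite <- (Hm 0). reflexivity.
  - assert (Hlift := lift_chain_complete _ _ le_dom_refl le_dom_trans IH2).
    destruct (fun_chain_lub (fun i => Val (u i)) Hlift Hu ltac:(discriminate))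
      as [h [Hub Hpointwise]].
    exists h. split; [exact Hub|].
    intros m Hm P d. apply (proj2 (Hpointwise P d)). intros i. exact (Hm i P d).
Qed.

Lemma safe_Bot {Priv} (th : aty Priv) : safe th Bot.
Proof. destruct th; exact I. Qed.

Lemma safe_not_Star {Priv} {th : aty Priv} {v} : safe th v -> v <> Star.
Proof. intros Hv ->. destruct th; exact Hv. Qed.

Lemma safe_le {Priv} (th : aty Priv) v w :
  le_lift (le_dom Priv (erase th)) v w -> safe th w -> safe th v.
Proof.
  revert v w.
  induction th as [|th1 _ Pi th2 IH2]; intros [| |g] [| |f]; simpl; try tauto.
  intros Hgf Hf P d HPi Hd. apply IH2 with (proj1_sig f P d); auto.
Qed.

Lemma lub_app_below {Priv t1 t2} {u : nat -> lift (carrier Priv (TArr t1 t2))} {f} :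
  ascending (le_lift (le_dom Priv (TArr t1 t2))) u -> (forall i, u i <> Star) ->
  is_lub (le_lift (le_dom Priv (TArr t1 t2))) u (Val f) ->
  forall P d, exists m, is_lub (le_lift (le_dom Priv t2)) (fun i => app (u i) P d) m /\
                   le_lift (le_dom Priv t2) (proj1_sig f P d) m.
Proof.
  intros Hu Hns [_ Hleast] P d.
  assert (Hlift := lift_chain_complete _ _ le_dom_refl le_dom_trans
                     (dom_chain_complete Priv t2)).
  destruct (fun_chain_lub u Hlift Hu Hns) as [h [Hub Hpointwise]].
  exists (proj1_sig h P d). split; [apply Hpointwise|]. exact (Hleast (Val h) Hub P d).
Qed.

Theorem lemma1 (Priv : Type) (th : aty Priv)
  (u : nat -> lift (carrier Priv (erase th))) (l : lift (carrier Priv (erase th))) :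
  ascending (le_lift (le_dom Priv (erase th))) u ->
  is_lub (le_lift (le_dom Priv (erase th))) u l ->
  (forall i, safe th (u i)) ->
  safe th l.
Proof.
  revert u l.
  induction th as [|th1 _ Pi th2 IH2]; intros u l Hu Hl Hsafe;
    assert (Hns : forall i, u i <> Star) by (intros i; exact (safe_not_Star (Hsafe i)));
    destruct l as [| |f]; try exact I;
    try (exfalso; exact (lub_not_Star _ _ _ _ Hns Hl eq_refl)).
  intros P d HPi Hd.
  destruct (lub_app_below Hu Hns Hl P d) as [m [Hm Hfm]].
  apply safe_le with m; [exact Hfm|].
  apply IH2 with (fun i => app (u i) P d); [exact (app_ascending Hu Hns P d)|exact Hm|].
  intros i. specialize (Hsafe i). destruct (u i) as [| |g]; [apply safe_Bot|contradiction|].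
  exact (Hsafe P d HPi Hd).
Qed.
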